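(* Let $\Gamma\curvearrowright X$ be an extreme boundary action, and let $U,V\subseteq X$ be non-empty open sets neither of which is dense in $X$. Then the normal closures of $\Gamma_U$ and $\Gamma_V$ in $\Gamma$ coincide and are equal to $\operatorname{int}(\Gamma\curvearrowright X)$. Moreover, $\Gamma_U$ is amenable if and only if $\Gamma_V$ is amenable, and $\Gamma_U$ is trivial if and only if $\Gamma_V$ is trivial.
   Context: An action of a discrete group $\Gamma$ by homeomorphisms on a compact Hausdorff space $X$ with more than two points is an extreme boundary action if for every closed $K\subsetneq X$ and every non-empty open $U\subseteq X$ there is $g\in\Gamma$ with $gK\subseteq U$. $\Gamma_U=\{g\in\Gamma: gx=x\ \forall x\in U\}$; $\Gamma_x^\circ$ is the subgroup of elements fixing pointwise a neighbourhood of $x$; $\operatorname{int}(\Gamma\curvearrowright X)=\langle\Gamma_x^\circ: x\in X\rangle$. *)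

From Stdlib Require Import Reals.
Open Scope R_scope.

Record Group := {
  gcar :> Type;
  gmul : gcar -> gcar -> gcar;
  ginv : gcar -> gcar;
  gone : gcar;
  gmul_assoc : forall a b c, gmul a (gmul b c) = gmul (gmul a b) c;
  gmul_1l : forall a, gmul gone a = a;
  gmul_1r : forall a, gmul a gone = a;
  gmul_Vl : forall a, gmul (ginv a) a = gone;
  gmul_Vr : forall a, gmul a (ginv a) = gone
}.

Definition is_subgroup (G : Group) (H : G -> Prop) : Prop :=
  H (gone G) /\
  (forall a b, H a -> H b -> H (gmul G a b)) /\
  (forall a, H a -> H (ginv G a)).

Definition is_normal_subgroup (G : Group) (H : G -> Prop) : Prop :=
  is_subgroup G H /\
  (forall g h, H h -> H (gmul G (gmul G g h) (ginv G g))).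

Definition generated_subgroup (G : Group) (S : G -> Prop) : G -> Prop :=
  fun g => forall H, is_subgroup G H -> (forall s, S s -> H s) -> H g.

Definition normal_closure (G : Group) (S : G -> Prop) : G -> Prop :=
  fun g => forall H, is_normal_subgroup G H -> (forall s, S s -> H s) -> H g.

Definition same_set {T : Type} (A B : T -> Prop) : Prop := forall x, A x <-> B x.

(** Amenability of a subgroup H of a discrete group G (viewed as a discrete
    group in its own right): existence of a left-invariant finitely additive
    probability mean defined on all subsets of H. *)
Definition amenable_subgroup (G : Group) (H : G -> Prop) : Prop :=
  exists m : (G -> Prop) -> R,
    (forall A, (forall x, A x -> H x) -> 0 <= m A) /\
    m H = 1 /\
    (forall A B, (forall x, A x -> H x) -> (forall x, B x -> H x) ->
       (forall x, A x -> B x -> False) ->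
       m (fun x => A x \/ B x) = m A + m B) /\
    (forall h A, H h -> (forall x, A x -> H x) ->
       m (fun x => A (gmul G (ginv G h) x)) = m A).

Definition trivial_subgroup (G : Group) (H : G -> Prop) : Prop :=
  forall g, H g -> g = gone G.

Record TopSpace := {
  tcar :> Type;
  is_open : (tcar -> Prop) -> Prop;
  open_full : is_open (fun _ => True);
  open_inter : forall U V, is_open U -> is_open V -> is_open (fun x => U x /\ V x);
  open_union : forall (I : Type) (F : I -> tcar -> Prop),
      (forall i, is_open (F i)) -> is_open (fun x => exists i, F i x)
}.

Definition is_closed (X : TopSpace) (K : X -> Prop) : Prop :=
  is_open X (fun x => ~ K x).

Definition compact_space (X : TopSpace) : Prop :=
  forall (I : Type) (F : I -> X -> Prop),
    (forall i, is_open X (F i)) -> (forall x, exists i, F i x) ->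
    exists l : list I, forall x, exists i, List.In i l /\ F i x.

Definition hausdorff (X : TopSpace) : Prop :=
  forall x y : X, x <> y ->
    exists U V, is_open X U /\ is_open X V /\ U x /\ V y /\
                (forall z, U z -> V z -> False).

Definition continuous (X : TopSpace) (f : X -> X) : Prop :=
  forall U, is_open X U -> is_open X (fun x => U (f x)).

Definition dense (X : TopSpace) (U : X -> Prop) : Prop :=
  forall W, is_open X W -> (exists x, W x) -> exists x, W x /\ U x.

Definition action_by_homeos (G : Group) (X : TopSpace) (act : G -> X -> X) : Prop :=
  (forall x, act (gone G) x = x) /\
  (forall g h x, act (gmul G g h) x = act g (act h x)) /\
  (forall g, continuous X (act g)).

Definition extreme_boundary_action (G : Group) (X : TopSpace) (act : G -> X -> X) : Prop :=
  action_by_homeos G X act /\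
  compact_space X /\ hausdorff X /\
  (exists x y z : X, x <> y /\ y <> z /\ x <> z) /\
  (forall K U, is_closed X K -> (exists x, ~ K x) ->
     is_open X U -> (exists x, U x) ->
     exists g, forall k, K k -> U (act g k)).

Definition rigid_stab (G : Group) (X : TopSpace) (act : G -> X -> X) (U : X -> Prop) : G -> Prop :=
  fun g => forall x, U x -> act g x = x.

Definition germ_stab (G : Group) (X : TopSpace) (act : G -> X -> X) (x : X) : G -> Prop :=
  fun g => exists W, is_open X W /\ W x /\ (forall y, W y -> act g y = y).

Definition int_action (G : Group) (X : TopSpace) (act : G -> X -> X) : G -> Prop :=
  generated_subgroup G (fun g => exists x, germ_stab G X act x g).

(* For a non-dense open set A, the extreme boundary property applied to the
   closed set X \ O, where O is a non-empty open set missing A, moves A into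
   any non-empty open set B by some g; conjugation by g then embeds Γ_B into
   Γ_A.  Hence Γ_U and Γ_V embed into each other, which transfers triviality
   and (as amenability passes to subgroups and along injective
   homomorphisms) amenability.  The same embedding shows that every germ
   stabiliser Γ_x° is conjugate into Γ_W for non-dense W, so the normal
   closure of Γ_W contains int(Γ ↷ X); conversely Γ_W ⊆ Γ_w° for w ∈ W and
   int(Γ ↷ X) is normal, being generated by a conjugation-invariant set. *)

From Stdlib Require Import Reals Classical ClassicalEpsilon.
From Stdlib Require Import FunctionalExtensionality PropExtensionality.

Local Notation "a ⋅ b" := (gmul _ a b) (at level 40, left associativity).
Local Notation "a ⁻¹" := (ginv _ a) (at level 3, format "a ⁻¹").

Lemma pred_ext {T : Type} (A B : T -> Prop) : (forall x, A x <-> B x) -> A = B.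
Proof.
  intro AB. apply functional_extensionality; intro x.
  apply propositional_extensionality, AB.
Qed.

Definition img {T U : Type} (f : T -> U) (A : T -> Prop) : U -> Prop :=
  fun y => exists x, A x /\ y = f x.

Section GroupTheory.
Variable G : Group.
Implicit Types a b c g k t : G.

Lemma mulKg a b : a⁻¹ ⋅ (a ⋅ b) = b.
Proof. rewrite gmul_assoc, gmul_Vl, gmul_1l; reflexivity. Qed.

Lemma mulVKg a b : a ⋅ (a⁻¹ ⋅ b) = b.
Proof. rewrite gmul_assoc, gmul_Vr, gmul_1l; reflexivity. Qed.

Lemma mulgK a b : b ⋅ a ⋅ a⁻¹ = b.
Proof. rewrite <- gmul_assoc, gmul_Vr, gmul_1r; reflexivity. Qed.

Lemma mulgKV a b : b ⋅ a⁻¹ ⋅ a = b.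
Proof. rewrite <- gmul_assoc, gmul_Vl, gmul_1r; reflexivity. Qed.

Lemma mulgI a b c : a ⋅ b = a ⋅ c -> b = c.
Proof. intro E. rewrite <- (mulKg a b), <- (mulKg a c), E; reflexivity. Qed.

Lemma mulIg a b c : b ⋅ a = c ⋅ a -> b = c.
Proof. intro E. rewrite <- (mulgK a b), <- (mulgK a c), E; reflexivity. Qed.

Lemma eq_invg_mul a b : a ⋅ b = gone G -> a = b⁻¹.
Proof. intro E. apply (mulIg b). rewrite E, gmul_Vl; reflexivity. Qed.

Lemma invMg a b : (a ⋅ b)⁻¹ = b⁻¹ ⋅ a⁻¹.
Proof.
  symmetry; apply eq_invg_mul.
  rewrite gmul_assoc, <- (gmul_assoc G b⁻¹), gmul_Vl, gmul_1r, gmul_Vl; reflexivity.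
Qed.

Lemma invgK a : a⁻¹⁻¹ = a.
Proof. symmetry; apply eq_invg_mul, gmul_Vr. Qed.

Definition conjg g a : G := g ⋅ a ⋅ g⁻¹.

Lemma conjgM g a b : conjg g (a ⋅ b) = conjg g a ⋅ conjg g b.
Proof. unfold conjg. rewrite !gmul_assoc, mulgKV; reflexivity. Qed.

Lemma conjg_inj g a b : conjg g a = conjg g b -> a = b.
Proof. unfold conjg. intro E. apply mulIg, mulgI in E; exact E. Qed.

Lemma conjgKV g a : conjg g (conjg g⁻¹ a) = a.
Proof. unfold conjg. rewrite invgK, !gmul_assoc, mulgK, gmul_Vr, gmul_1l; reflexivity. Qed.

Lemma generated_subgroup_subgroup S : is_subgroup G (generated_subgroup G S).
Proof.
  split; [|split].
  - intros H [H1 _] _; exact H1.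
  - intros a b Sa Sb H HH SH. apply (proj1 (proj2 HH)); [apply Sa | apply Sb]; assumption.
  - intros a Sa H HH SH. apply (proj2 (proj2 HH)), Sa; assumption.
Qed.

Section Homomorphism.
Variable phi : G -> G.
Hypothesis phiM : forall a b, phi (a ⋅ b) = phi a ⋅ phi b.

Lemma hom1 : phi (gone G) = gone G.
Proof. apply (mulgI (phi (gone G))). rewrite <- phiM, !gmul_1r; reflexivity. Qed.

Lemma homV a : phi a⁻¹ = (phi a)⁻¹.
Proof. apply eq_invg_mul. rewrite <- phiM, gmul_Vl. exact hom1. Qed.

Lemma subgroup_preimage H : is_subgroup G H -> is_subgroup G (fun a => H (phi a)).
Proof.
  intros [H1 [HM HV]]. split; [|split].
  - rewrite hom1; exact H1.
  - intros a b Ha Hb. rewrite phiM; auto.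
  - intros a Ha. rewrite homV; auto.
Qed.

Lemma subgroup_img H : is_subgroup G H -> is_subgroup G (img phi H).
Proof.
  intros [H1 [HM HV]]. split; [|split].
  - exists (gone G). split; [exact H1 | symmetry; exact hom1].
  - intros ? ? (a & Ha & ->) (b & Hb & ->). exists (a ⋅ b). split; [auto | symmetry; apply phiM].
  - intros ? (a & Ha & ->). exists a⁻¹. split; [auto | symmetry; apply homV].
Qed.

End Homomorphism.

Lemma generated_subgroup_normal S :
  (forall g s, S s -> S (conjg g s)) -> is_normal_subgroup G (generated_subgroup G S).
Proof.
  intros S_conj. split; [apply generated_subgroup_subgroup|].
  intros g h Sh. apply (Sh (fun a => generated_subgroup G S (conjg g a))).
  - apply subgroup_preimage; [apply conjgM | apply generated_subgroup_subgroup].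
  - intros s Ss H HH SH. apply SH, S_conj, Ss.
Qed.

(* The classes of [a ~ b <-> K (a ⋅ b⁻¹)] are the right cosets K t; a choice
   of one representative in H per class meeting H is a right transversal. *)
Definition right_transversal (K H T : G -> Prop) : Prop :=
  (forall t, T t -> H t) /\
  (forall x, H x -> exists k t, K k /\ T t /\ x = k ⋅ t) /\
  (forall k k' t t', K k -> K k' -> T t -> T t' -> k ⋅ t = k' ⋅ t' -> t = t').

Lemma right_transversal_exists K H :
  is_subgroup G K -> exists T, right_transversal K H T.
Proof.
  intros [K1 [KM KV]].
  set (rep := fun x => epsilon (inhabits (gone G)) (fun y => H y /\ K (x ⋅ y⁻¹))).
  assert (rep_spec : forall x, H x -> H (rep x) /\ K (x ⋅ (rep x)⁻¹)).
  { intros x Hx. apply (epsilon_spec (inhabits (gone G)) (fun y => H y /\ K (x ⋅ y⁻¹))).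
    exists x. rewrite gmul_Vr; auto. }
  assert (rep_eq : forall x y, K (x ⋅ y⁻¹) -> rep x = rep y).
  { intros x y Kxy. unfold rep. f_equal. apply pred_ext; intro z.
    split; intros [Hz Kz]; split; auto.
    - replace (y ⋅ z⁻¹) with ((x ⋅ y⁻¹)⁻¹ ⋅ (x ⋅ z⁻¹)); [auto|].
      rewrite invMg, invgK, <- gmul_assoc, mulKg; reflexivity.
    - replace (x ⋅ z⁻¹) with ((x ⋅ y⁻¹) ⋅ (y ⋅ z⁻¹)); [auto|].
      rewrite <- gmul_assoc, mulKg; reflexivity. }
  exists (fun t => H t /\ rep t = t). split; [|split].
  - intros t [Ht _]; exact Ht.
  - intros x Hx. destruct (rep_spec x Hx) as [Hr Kr].
    exists (x ⋅ (rep x)⁻¹), (rep x). split; [exact Kr|]. split; [split; [exact Hr|]|].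
    + apply rep_eq. rewrite <- (invgK (rep x)) at 1. rewrite <- invMg. auto.
    + rewrite mulgKV; reflexivity.
  - intros k k' t t' Kk Kk' [_ Rt] [_ Rt'] E. rewrite <- Rt, <- Rt'. apply rep_eq.
    replace (t ⋅ t'⁻¹) with (k⁻¹ ⋅ k'); [auto|].
    rewrite <- (mulKg k t), E, gmul_assoc, mulgK; reflexivity.
Qed.

(* The mean of A ⊆ K is that of the union of the translates A t, t ∈ T. *)
Lemma amenable_subgroup_sub H K :
  is_subgroup G H -> is_subgroup G K -> (forall a, K a -> H a) ->
  amenable_subgroup G H -> amenable_subgroup G K.
Proof.
  intros [_ [HM _]] HK KH (m & m_ge0 & mH & m_add & m_inv).
  destruct (right_transversal_exists K H HK) as (T & TH & T_cover & T_uniq).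
  set (AT := fun A x => exists a t, A a /\ T t /\ x = a ⋅ t).
  assert (AT_sub : forall A, (forall a, A a -> K a) -> forall x, AT A x -> H x).
  { intros A AK x (a & t & Aa & Tt & ->). apply HM; auto. }
  exists (fun A => m (AT A)). split; [|split; [|split]].
  - intros A AK. apply m_ge0, AT_sub, AK.
  - rewrite <- mH. f_equal. apply pred_ext; intro x. split; [apply AT_sub; auto|].
    intro Hx. destruct (T_cover x Hx) as (k & t & Kk & Tt & ->). exists k, t; auto.
  - intros A B AK BK AB.
    replace (AT (fun x => A x \/ B x)) with (fun x => AT A x \/ AT B x).
    + apply m_add; try (apply AT_sub; assumption).
      intros x (a & t & Aa & Tt & ->) (b & t' & Bb & Tt' & E).
      assert (t = t') as <- by (apply (T_uniq a b); auto).
      apply mulIg in E as ->. exact (AB b Aa Bb).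
    + apply pred_ext; intro x. split.
      * intros [(a & t & Aa & Tt & ->) | (a & t & Ba & Tt & ->)]; exists a, t; auto.
      * intros (a & t & [Aa | Ba] & Tt & ->); [left | right]; exists a, t; auto.
  - intros h A Kh AK.
    rewrite <- (m_inv h (AT A)); [| auto | apply AT_sub; assumption].
    f_equal. apply pred_ext; intro x. split.
    + intros (a & t & Aa & Tt & ->). exists (h⁻¹ ⋅ a), t.
      split; [exact Aa|]. split; [exact Tt | apply gmul_assoc].
    + intros (a & t & Aa & Tt & E). exists (h ⋅ a), t.
      split; [rewrite mulKg; exact Aa|]. split; [exact Tt|].
      apply (mulgI h⁻¹). rewrite E, <- gmul_assoc, mulKg; reflexivity.
Qed.

Section InjectiveHomomorphism.
Variable phi : G -> G.
Hypothesis phiM : forall a b, phi (a ⋅ b) = phi a ⋅ phi b.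
Hypothesis phi_inj : forall a b, phi a = phi b -> a = b.

Lemma amenable_subgroup_of_img H :
  amenable_subgroup G (img phi H) -> amenable_subgroup G H.
Proof.
  intros (m & m_ge0 & mH & m_add & m_inv).
  exists (fun A => m (img phi A)). split; [|split; [|split]].
  - intros A AH. apply m_ge0. intros y (a & Aa & ->). exists a; auto.
  - exact mH.
  - intros A B AH BH AB.
    replace (img phi (fun x => A x \/ B x)) with (fun y => img phi A y \/ img phi B y).
    + apply m_add.
      * intros y (a & Aa & ->); exists a; auto.
      * intros y (b & Bb & ->); exists b; auto.
      * intros y (a & Aa & ->) (b & Bb & E). apply phi_inj in E as ->. exact (AB b Aa Bb).
    + apply pred_ext; intro y. split.
      * intros [(a & Aa & ->) | (a & Ba & ->)]; exists a; auto.
      * intros (a & [Aa | Ba] & ->); [left | right]; exists a; auto.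
  - intros h A Hh AH.
    rewrite <- (m_inv (phi h) (img phi A)).
    + f_equal. apply pred_ext; intro y. split.
      * intros (a & Aa & ->). exists (h⁻¹ ⋅ a). split; [exact Aa|].
        rewrite phiM, homV; auto.
      * intros (a & Aa & E). exists (h ⋅ a). split; [rewrite mulKg; exact Aa|].
        rewrite phiM, <- E, mulVKg; reflexivity.
    + exists h; auto.
    + intros y (a & Aa & ->); exists a; auto.
Qed.

Lemma amenable_subgroup_preimage H H' :
  is_subgroup G H -> is_subgroup G H' -> (forall a, H' a -> H (phi a)) ->
  amenable_subgroup G H -> amenable_subgroup G H'.
Proof.
  intros HH HH' phiH amH. apply amenable_subgroup_of_img.
  apply (amenable_subgroup_sub H); [exact HH | apply subgroup_img; assumption | | exact amH].
  intros ? (a & Ha & ->); auto.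
Qed.

Lemma trivial_subgroup_preimage H H' :
  (forall a, H' a -> H (phi a)) -> trivial_subgroup G H -> trivial_subgroup G H'.
Proof. intros phiH trH a Ha. apply phi_inj. rewrite (hom1 phi phiM). auto. Qed.

End InjectiveHomomorphism.

Section Action.
Variables (X : TopSpace) (act : G -> X -> X).
Hypothesis Hact : action_by_homeos G X act.

Lemma act_invK g y : act g⁻¹ (act g y) = y.
Proof. destruct Hact as (act1 & actM & _). rewrite <- actM, gmul_Vl, act1; reflexivity. Qed.

Lemma act_invKV g y : act g (act g⁻¹ y) = y.
Proof. destruct Hact as (act1 & actM & _). rewrite <- actM, gmul_Vr, act1; reflexivity. Qed.

Lemma rigid_stab_subgroup U : is_subgroup G (rigid_stab G X act U).
Proof.
  destruct Hact as (act1 & actM & _). split; [|split].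
  - intros x _; apply act1.
  - intros a b Ha Hb x Ux. rewrite actM, Hb, Ha; auto.
  - intros a Ha x Ux. rewrite <- (Ha x Ux) at 1. apply act_invK.
Qed.

Lemma rigid_stab_conjg U W g h :
  (forall y, U y -> W (act g y)) -> rigid_stab G X act W h ->
  rigid_stab G X act U (conjg g⁻¹ h).
Proof.
  destruct Hact as (_ & actM & _). intros gUW Hh y Uy. unfold conjg.
  rewrite invgK, !actM, (Hh _ (gUW y Uy)). apply act_invK.
Qed.

Lemma germ_stab_conjg x g s :
  germ_stab G X act x s -> germ_stab G X act (act g x) (conjg g s).
Proof.
  destruct Hact as (_ & actM & act_cont). intros (W & HW & Wx & sW).
  exists (fun y => W (act g⁻¹ y)). split; [|split].
  - apply act_cont, HW.
  - rewrite act_invK; exact Wx.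
  - intros y Wy. unfold conjg. rewrite !actM, (sW _ Wy). apply act_invKV.
Qed.

Lemma int_action_normal : is_normal_subgroup G (int_action G X act).
Proof.
  apply generated_subgroup_normal.
  intros g s (x & Hs). exists (act g x). apply germ_stab_conjg, Hs.
Qed.

Lemma not_dense_disjoint_open U :
  ~ dense X U -> exists O, is_open X O /\ (exists x, O x) /\ (forall x, O x -> ~ U x).
Proof.
  intro HU. apply NNPP; intro noO. apply HU. intros W HW HWne.
  apply NNPP; intro noWU. apply noO. exists W. split; [exact HW|]. split; [exact HWne|].
  intros x Wx Ux. apply noWU; eauto.
Qed.

Lemma closed_compl O : is_open X O -> is_closed X (fun x => ~ O x).
Proof.
  intro HO. unfold is_closed.
  replace (fun x => ~ ~ O x) with O; [exact HO|].
  apply pred_ext; intro x. split; [tauto | apply NNPP].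
Qed.

Section Extreme.
Hypothesis Hext : extreme_boundary_action G X act.

Lemma extreme_move_into U W :
  ~ dense X U -> is_open X W -> (exists x, W x) ->
  exists g, forall y, U y -> W (act g y).
Proof.
  destruct Hext as (_ & _ & _ & _ & move). intros HU HW HWne.
  destruct (not_dense_disjoint_open U HU) as (O & HO & [x Ox] & OU).
  destruct (move (fun x => ~ O x) W) as [g Hg].
  - apply closed_compl, HO.
  - exists x; tauto.
  - exact HW.
  - exact HWne.
  - exists g. intros y Uy. apply Hg. intro Oy. exact (OU y Oy Uy).
Qed.

Lemma normal_closure_rigid_stab W :
  is_open X W -> (exists x, W x) -> ~ dense X W ->
  same_set (normal_closure G (rigid_stab G X act W)) (int_action G X act).
Proof.
  intros HW [w Ww] HWd s. split.
  - intro Hs. apply Hs; [exact int_action_normal|].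
    intros h Hh N HN SN. apply SN. exists w, W; auto.
  - intros Hs N [HN N_conj] WN. apply Hs; [exact HN|].
    intros h (x & O & HO & Ox & hO).
    destruct (extreme_move_into W O HWd HO (ex_intro _ x Ox)) as [g Hg].
    rewrite <- (conjgKV g h). apply N_conj, WN.
    apply (rigid_stab_conjg W O); assumption.
Qed.

Lemma rigid_stab_transfer A B :
  ~ dense X A -> is_open X B -> (exists x, B x) ->
  (amenable_subgroup G (rigid_stab G X act A) -> amenable_subgroup G (rigid_stab G X act B)) /\
  (trivial_subgroup G (rigid_stab G X act A) -> trivial_subgroup G (rigid_stab G X act B)).
Proof.
  intros HA HB HBne.
  destruct (extreme_move_into A B HA HB HBne) as [g Hg].
  assert (conj_into : forall h, rigid_stab G X act B h -> rigid_stab G X act A (conjg g⁻¹ h))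
    by (intros h; apply rigid_stab_conjg, Hg).
  split.
  - apply (amenable_subgroup_preimage (conjg g⁻¹));
      [apply conjgM | apply conjg_inj | apply rigid_stab_subgroup ..| exact conj_into].
  - apply (trivial_subgroup_preimage (conjg g⁻¹));
      [apply conjgM | apply conjg_inj | exact conj_into].
Qed.

End Extreme.
End Action.
End GroupTheory.

Theorem mainTheorem6 (G : Group) (X : TopSpace) (act : G -> X -> X)
  (U V : X -> Prop) :
  extreme_boundary_action G X act ->
  is_open X U -> (exists x, U x) -> ~ dense X U ->
  is_open X V -> (exists x, V x) -> ~ dense X V ->
  same_set (normal_closure G (rigid_stab G X act U))
           (normal_closure G (rigid_stab G X act V)) /\
  same_set (normal_closure G (rigid_stab G X act U)) (int_action G X act) /\
  (amenable_subgroup G (rigid_stab G X act U) <->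
   amenable_subgroup G (rigid_stab G X act V)) /\
  (trivial_subgroup G (rigid_stab G X act U) <->
   trivial_subgroup G (rigid_stab G X act V)).
Proof.
  intros Hext HU HUne HUd HV HVne HVd.
  pose proof (proj1 Hext) as Hact.
  pose proof (normal_closure_rigid_stab G X act Hact Hext U HU HUne HUd) as ncU.
  pose proof (normal_closure_rigid_stab G X act Hact Hext V HV HVne HVd) as ncV.
  destruct (rigid_stab_transfer G X act Hact Hext U V HUd HV HVne) as [amUV trUV].
  destruct (rigid_stab_transfer G X act Hact Hext V U HVd HU HUne) as [amVU trVU].
  split; [intro s; rewrite (ncU s), (ncV s); reflexivity|].
  split; [exact ncU|].
  split; split; assumption.
Qed.
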